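(* Let $h$ be a hospital whose utility is proportional to total wage, i.e. $f_h(Y)=\gamma_h w_h(Y)$ for all $Y\subseteq X_h$ for some $\gamma_h>0$. Define $\mathrm{Ch}_h:2^{X_h}\to2^{X_h}$ as follows: given $X'\subseteq X_h$ (with $\mathrm{Ch}_h(\emptyset)=\emptyset$), sort $X'$ in non-decreasing order of wage (ties broken by a fixed order) as $x^{(1)},\dots,x^{(|X'|)}$; set $Y=\{x^{(|X'|)}\}$; for $i=1,\dots,|X'|-1$ add $x^{(i)}$ to $Y$ if $w_h(Y\cup\{x^{(i)}\})<1.5\,B_h$; return $Y$. Then $\mathrm{Ch}_h$ satisfies SUB, IRC and COM.
   Context: Hospital $h$ has a finite set $X_h$ of contracts $x$ with wages $x_W$, $0<x_W\le B_h$, where $B_h>0$ is its budget. $w_h(Y)=\sum_{x\in Y}x_W$ for $Y\subseteq X_h$. For $\mathrm{Ch}_h$ with $\mathrm{Ch}_h(Y)\subseteq Y$: SUB means for all $Y''\subseteq Y'\subseteq X_h$, $Y''\setminus\mathrm{Ch}_h(Y'')\subseteq Y'\setminus\mathrm{Ch}_h(Y')$; IRC means for $Y'\subseteq X_h$, $Y''\subseteq X_h\setminus Y'$, if $\mathrm{Ch}_h(Y'\cup Y'')\subseteq Y'$ then $\mathrm{Ch}_h(Y')=\mathrm{Ch}_h(Y'\cup Y'')$; COM means for all $Y''\subseteq Y'\subseteq X_h$ with $w_h(Y'')\le\max\{B_h,w_h(\mathrm{Ch}_h(Y'))\}$, $f_h(\mathrm{Ch}_h(Y'))\ge f_h(Y'')$.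 *)

From HB Require Import structures.
From mathcomp Require Import all_boot all_order all_algebra.
Set Implicit Arguments. Unset Strict Implicit. Unset Printing Implicit Defensive.
Import Order.TTheory GRing.Theory Num.Theory.
Local Open Scope ring_scope.

Definition wsum (R : numDomainType) (X : finType) (w : X -> R) (Y : {set X}) : R :=
  \sum_(x in Y) w x.

Definition wage_le (R : realDomainType) (X : finType) (w : X -> R) (r : X -> nat) : rel X :=
  fun x y => (w x < w y) || ((w x == w y) && (r x <= r y)%N).

Definition greedy_step (R : realFieldType) (X : finType) (w : X -> R) (B : R)
  (Y : {set X}) (x : X) : {set X} :=
  if wsum w (x |: Y) < (3 / 2) * B then x |: Y else Y.

(* The choice function of the statement: sort X' as x^(1..n), start with
   {x^(n)}, then try x^(1), ..., x^(n-1) in order. Ch(∅) = ∅. *)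
Definition Ch (R : realFieldType) (X : finType) (w : X -> R) (r : X -> nat) (B : R)
  (X' : {set X}) : {set X} :=
  match sort (wage_le w r) (enum X') with
  | [::] => set0
  | x :: t => foldl (greedy_step w B) [set last x t] (belast x t)
  end.

Definition SUB (X : finType) (C : {set X} -> {set X}) : Prop :=
  forall Y'' Y' : {set X}, Y'' \subset Y' -> (Y'' :\: C Y'') \subset (Y' :\: C Y').

Definition IRC (X : finType) (C : {set X} -> {set X}) : Prop :=
  forall Y' Y'' : {set X}, Y'' \subset ~: Y' ->
    C (Y' :|: Y'') \subset Y' -> C Y' = C (Y' :|: Y'').

Definition COM (R : realDomainType) (X : finType) (w : X -> R) (B : R)
  (f : {set X} -> R) (C : {set X} -> {set X}) : Prop :=
  forall Y'' Y' : {set X}, Y'' \subset Y' ->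
    wsum w Y'' <= Num.max B (wsum w (C Y')) -> f Y'' <= f (C Y').

(* Sorted by wage, the loop accepts, besides the top contract m, exactly an
   initial segment of the other contracts: z is kept iff m together with all
   contracts up to z weighs less than 1.5 B, since once some y is rejected every
   later, heavier z is rejected too.  With this closed form SUB and IRC reduce to
   monotonicity of lower sets in the offered set, and every rejected z satisfies
   1.5 B <= w z + w (Ch X').  So when w (Ch X') < B the rejected contracts and the
   top one all weigh more than B/2; a subset of X' of wage at most B contains at
   most one of them and is therefore outweighed by Ch X', which gives COM. *)

From HB Require Import structures.
From mathcomp Require Import all_boot all_order all_algebra.
From mathcomp Require Import lra.
Set Implicit Arguments. Unset Strict Implicit. Unset Printing Implicit Defensive.
Import Order.TTheory GRing.Theory Num.Theory.
Local Open Scope ring_scope.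

Section WageOrder.
Variables (R : realDomainType) (X : finType) (w : X -> R) (r : X -> nat).
Local Notation wle := (wage_le w r).

Lemma wage_le_refl : reflexive wle.
Proof. by move=> x; rewrite /wage_le eqxx leqnn orbT. Qed.

Lemma wage_le_trans : transitive wle.
Proof.
move=> y x z; rewrite /wage_le.
case/orP=> [lt_xy|/andP[/eqP-> le_xy]] /orP[lt_yz|/andP[/eqP<- le_yz]].
- by rewrite (lt_trans lt_xy lt_yz).
- by rewrite lt_xy.
- by rewrite lt_yz.
- by rewrite eqxx (leq_trans le_xy le_yz) orbT.
Qed.

Lemma wage_le_total : total wle.
Proof.
by move=> x y; rewrite /wage_le; case: ltgtP => //= _; rewrite ?orbT ?leq_total.
Qed.

Lemma wage_leW x y : wle x y -> w x <= w y.
Proof. by case/orP=> [/ltW|/andP[/eqP-> _]]. Qed.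

Definition is_top (M : {set X}) m := m \in M /\ {in M, forall y, wle y m}.

Definition lower (M : {set X}) z := [set y in M | wle y z].

Lemma lowerS (M N : {set X}) z : M \subset N -> lower M z \subset lower N z.
Proof.
move=> sMN; apply/subsetP => y; rewrite !inE => /andP[yM ->].
by rewrite (subsetP sMN y yM).
Qed.

Hypothesis r_inj : injective r.

Lemma wage_le_anti x y : wle x y -> wle y x -> x = y.
Proof.
rewrite /wage_le => /orP[lt_xy|/andP[/eqP e_xy le_xy]]
  /orP[lt_yx|/andP[/eqP e_yx le_yx]].
- by move: (lt_trans lt_xy lt_yx); rewrite ltxx.
- by move: lt_xy; rewrite e_yx ltxx.
- by move: lt_yx; rewrite e_xy ltxx.
- by apply: r_inj; apply/eqP; rewrite eqn_leq le_xy le_yx.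
Qed.

Lemma top_uniq (M : {set X}) m m' : is_top M m -> is_top M m' -> m = m'.
Proof.
by move=> [mM topm] [m'M topm']; apply: wage_le_anti; [apply: topm'|apply: topm].
Qed.

Lemma top_notin_lower (M : {set X}) m z :
  is_top M m -> z \in M -> z != m -> m \notin lower M z.
Proof.
move=> [_ topm] zM; apply: contra => /[!inE] /andP[_ le_mz].
by rewrite (wage_le_anti le_mz (topm z zM)).
Qed.

End WageOrder.

Section WageSum.
Variables (R : numDomainType) (X : finType) (w : X -> R).

Lemma wsumU1 a (A : {set X}) : a \notin A -> wsum w (a |: A) = w a + wsum w A.
Proof. by move=> aA; rewrite /wsum big_setU1. Qed.

Hypothesis w_ge0 : forall x, 0 <= w x.

Lemma le_wsum (A C : {set X}) : A \subset C -> wsum w A <= wsum w C.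
Proof.
move=> sAC; rewrite /wsum [leRHS](big_setID A) /= (setIidPr sAC) lerDl.
by apply: sumr_ge0 => x _.
Qed.

Lemma wsum2_le u v (Y : {set X}) : u != v -> u \in Y -> v \in Y ->
  w u + w v <= wsum w Y.
Proof.
move=> uv uY vY; have <- : wsum w [set u; v] = w u + w v.
  by rewrite wsumU1 ?inE // /wsum big_set1.
by apply: le_wsum; apply/subsetP => y /[!inE] /orP[]/eqP->.
Qed.

Lemma le_wsum_exchange u m (Y C : {set X}) : u \in Y -> m \in C ->
  Y :\ u \subset C :\ m -> w u <= w m -> wsum w Y <= wsum w C.
Proof.
move=> uY mC sYC le_um; rewrite -(setD1K uY) -(setD1K mC) !wsumU1 ?setD11 //.
by rewrite lerD // le_wsum.
Qed.

End WageSum.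

Section Greedy.
Variables (R : realFieldType) (X : finType) (w : X -> R) (r : X -> nat) (B : R).
Hypothesis w_ge0 : forall x, 0 <= w x.
Hypothesis r_inj : injective r.
Local Notation wle := (wage_le w r).
Local Notation lower := (lower w r).
Local Notation is_top := (is_top w r).

Definition prefix_choice (M : {set X}) m :=
  [set z in M | (z == m) || (wsum w (m |: lower M z) < 3 / 2 * B)].

Lemma prefix_choice_sub M m : prefix_choice M m \subset M.
Proof. by apply/subsetP => z /[!inE] /andP[]. Qed.

Lemma prefix_choice_top (M : {set X}) m : m \in M -> m \in prefix_choice M m.
Proof. by move=> mM; rewrite inE mM eqxx. Qed.

Lemma mem_prefix_choice (M : {set X}) m z : z \in M -> z != m ->
  (z \in prefix_choice M m) = (wsum w (m |: lower M z) < 3 / 2 * B).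
Proof. by move=> zM zm; rewrite inE zM (negbTE zm). Qed.

Lemma prefix_choice_below (M : {set X}) m y z : m \in M ->
  y \in prefix_choice M m -> y != m -> z \in M -> z \notin prefix_choice M m ->
  wle y z.
Proof.
move=> mM yC ym zM zC; case/orP: (wage_le_total w r y z) => // le_zy.
have zm : z != m by apply: contraNneq zC => ->; apply: prefix_choice_top.
have yM := subsetP (prefix_choice_sub M m) y yC.
move: zC; rewrite mem_prefix_choice // -leNgt => zC.
move: yC; rewrite mem_prefix_choice // ltNge => /negP[].
apply: le_trans zC _; apply: le_wsum => //; apply: setUS.
apply/subsetP => x /[!inE] /andP[-> le_xz] /=.
exact: wage_le_trans le_xz le_zy.
Qed.

Lemma prefix_choice_rejected (M : {set X}) m z : m \in M -> z \in M ->
  z \notin prefix_choice M m -> 3 / 2 * B <= w z + wsum w (prefix_choice M m).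
Proof.
move=> mM zM zC; set C := prefix_choice M m.
pose rejected_below y := [&& y \in M, y \notin C & wle y z].
have rej_z : rejected_below z by rewrite /rejected_below zM zC wage_le_refl.
(* A rejected y0 <= z with fewest predecessors: all contracts below y0 are kept. *)
case: (arg_minnP (fun y => #|lower M y|) rej_z) => y0.
move=> /and3P[y0M y0C le_y0z] min_y0.
have y0m : y0 != m by apply: contraNneq y0C => ->; apply: prefix_choice_top.
have sub : m |: lower M y0 \subset y0 |: C.
  apply/subsetP => y; rewrite !in_setU1 => /orP[/eqP->|].
    by rewrite prefix_choice_top ?orbT.
  rewrite inE => /andP[yM le_yy0]; case: eqVneq => //= yy0.
  apply/negPn/negP => yC.
  have := min_y0 y; rewrite /rejected_below yM yC (wage_le_trans le_yy0 le_y0z).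
  move=> /(_ isT).
  apply/negP; rewrite -ltnNge; apply: proper_card; apply/properP; split.
    apply/subsetP => x /[!inE] /andP[-> le_xy] /=.
    exact: wage_le_trans le_xy le_yy0.
  exists y0; rewrite !inE y0M /= ?wage_le_refl //.
  by apply: contra yy0 => le_y0y; rewrite (wage_le_anti r_inj le_yy0 le_y0y).
move: (y0C); rewrite mem_prefix_choice // -leNgt => rej.
have := le_wsum w_ge0 sub; rewrite [wsum w (y0 |: C)]wsumU1 //.
have := wage_leW le_y0z; lra.
Qed.

Lemma greedy_step_prefix_choice (M : {set X}) m a : m \in M -> a \notin M ->
  {in M, forall y, y != m -> wle y a} ->
  greedy_step w B (prefix_choice M m) a = prefix_choice (a |: M) m.
Proof.
move=> mM aM le_Ma.
have am : a != m by apply: contraNneq aM => ->.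
have aC : a \notin prefix_choice M m.
  by apply: contra aM; apply: (subsetP (prefix_choice_sub M m)).
have lowerE : {in M, forall z, z != m -> lower (a |: M) z = lower M z}.
  move=> z zM zm; apply/setP => y; rewrite !inE; case: eqVneq => [->|_] //=.
  rewrite (negbTE aM); apply/negbTE; apply: contra aM => le_az.
  by rewrite (wage_le_anti r_inj le_az (le_Ma z zM zm)).
have lower_a : m |: lower (a |: M) a = a |: M.
  apply/setP => y; rewrite !inE; case: eqVneq => [->|ym]; first by rewrite mM orbT.
  case: eqVneq => [->|ya] /=; first by rewrite wage_le_refl.
  by case: (boolP (y \in M)) => // yM; rewrite le_Ma.
have fits : (wsum w (a |: prefix_choice M m) < 3 / 2 * B)
             = (wsum w (a |: M) < 3 / 2 * B).
  apply/idP/idP => [fit|]; last first.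
    by apply: le_lt_trans; apply/le_wsum/setUS/prefix_choice_sub.
  case: (boolP (M \subset prefix_choice M m)) => [sMC|/subsetPn[z zM zC]].
    suff -> : M = prefix_choice M m by [].
    by apply/eqP; rewrite eqEsubset sMC prefix_choice_sub.
  have zm : z != m by apply: contraNneq zC => ->; apply: prefix_choice_top.
  have := prefix_choice_rejected mM zM zC; have := wage_leW (le_Ma z zM zm).
  by move: fit; rewrite wsumU1 //; lra.
apply/setP => z; rewrite /greedy_step fits.
case: (eqVneq z a) => [->|za].
  rewrite mem_prefix_choice ?setU11 // lower_a.
  by case: ifP; rewrite ?setU11 // (negbTE aC).
have -> : (z \in prefix_choice (a |: M) m) = (z \in prefix_choice M m).
  rewrite !inE (negbTE za) /=; case: (boolP (z \in M)) => //= zM.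
  by case: eqVneq => //= zm; rewrite lowerE.
by case: ifP => _ //; rewrite in_setU1 (negbTE za).
Qed.

Lemma foldl_greedy_step m (l : seq X) : uniq l -> m \notin l -> pairwise wle l ->
  foldl (greedy_step w B) [set m] l = prefix_choice (m |: [set y in l]) m.
Proof.
elim/last_ind: l => [|l a IH].
  by move=> *; apply/setP => z; rewrite !inE; case: eqVneq.
rewrite rcons_uniq mem_rcons inE negb_or pairwise_rcons.
move=> /andP[al ul] /andP[ma ml] /andP[le_la pl].
rewrite foldl_rcons IH //.
have -> : m |: [set y in rcons l a] = a |: (m |: [set y in l]).
  by apply/setP => z; rewrite !inE mem_rcons inE; case: (z == m); case: (z == a).
apply: greedy_step_prefix_choice.
- by rewrite !inE eqxx.
- by rewrite !inE negb_or eq_sym ma al.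
- move=> y; rewrite !inE => /orP[/eqP->|yl]; first by rewrite eqxx.
  by move=> _; apply: (allP le_la).
Qed.

Lemma Ch_prefix_choice (M : {set X}) : M != set0 ->
  exists2 m, is_top M m & Ch w r B M = prefix_choice M m.
Proof.
case/set0Pn => x0 x0M; rewrite /Ch.
have sorted_M := sort_sorted (wage_le_total w r) (enum M).
have uniq_M : uniq (sort wle (enum M)) by rewrite sort_uniq enum_uniq.
have mem_M : sort wle (enum M) =i M by move=> y; rewrite mem_sort mem_enum.
move: sorted_M uniq_M mem_M; case: (sort wle (enum M)) => [|x t].
  by move=> _ _ /(_ x0); rewrite x0M.
rewrite lastI (sorted_pairwise (@wage_le_trans _ _ w r)) pairwise_rcons.
rewrite rcons_uniq => /andP[le_lm pl] /andP[ml ul] mem_M.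
have top_m : is_top M (last x t).
  split=> [|y]; first by rewrite -mem_M mem_rcons mem_head.
  rewrite -mem_M mem_rcons inE => /orP[/eqP->|/(allP le_lm) //].
  exact: wage_le_refl.
exists (last x t) => //; rewrite foldl_greedy_step //.
by congr prefix_choice; apply/setP => y; rewrite !inE -mem_M mem_rcons inE.
Qed.

Lemma Ch_top (M : {set X}) m : is_top M m -> Ch w r B M = prefix_choice M m.
Proof.
move=> top_m; have : M != set0 by apply/set0Pn; exists m; case: top_m.
by case/Ch_prefix_choice => m' top_m' ->; rewrite (top_uniq r_inj top_m' top_m).
Qed.

Lemma prefix_choiceS_rejected (Y2 Y1 : {set X}) m2 m1 x : Y2 \subset Y1 ->
  is_top Y2 m2 -> is_top Y1 m1 -> x \in Y2 -> x \notin prefix_choice Y2 m2 ->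
  x \notin prefix_choice Y1 m1.
Proof.
move=> sY top2 top1 xY2 xC2; have xY1 := subsetP sY x xY2.
have xm2 : x != m2 by apply: contraNneq xC2 => ->; apply/prefix_choice_top/top2.1.
have xm1 : x != m1.
  apply: contraNneq xm2 => xm1; apply/eqP/esym/(top_uniq r_inj top2).
  by split=> // y yY2; rewrite xm1; apply/top1.2/(subsetP sY).
move: xC2; rewrite !mem_prefix_choice // -!leNgt.
rewrite !wsumU1 ?(top_notin_lower r_inj top1) ?(top_notin_lower r_inj top2) //.
have := le_wsum w_ge0 (lowerS w r x sY).
have := wage_leW (top1.2 m2 (subsetP sY m2 top2.1)); lra.
Qed.

Lemma SUB_Ch : SUB (Ch w r B).
Proof.
move=> Y2 Y1 sY; apply/subsetP => x /setDP[xY2 xC2].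
have xY1 := subsetP sY x xY2.
have [m2 top2 eC2] : exists2 m, is_top Y2 m & Ch w r B Y2 = prefix_choice Y2 m.
  by apply: Ch_prefix_choice; apply/set0Pn; exists x.
have [m1 top1 ->] : exists2 m, is_top Y1 m & Ch w r B Y1 = prefix_choice Y1 m.
  by apply: Ch_prefix_choice; apply/set0Pn; exists x.
by rewrite inE xY1 (prefix_choiceS_rejected sY top2 top1) -?eC2.
Qed.

Lemma IRC_Ch : IRC (Ch w r B).
Proof.
move=> Y1 Y2 _ sCY1; set Z := Y1 :|: Y2 in sCY1 *.
have sY1Z : Y1 \subset Z := subsetUl Y1 Y2.
have [Z0|/Ch_prefix_choice[m top_m eC]] := eqVneq Z set0.
  by move: sY1Z; rewrite Z0 subset0 => /eqP->.
rewrite eC in sCY1 *.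
have mY1 : m \in Y1 by apply/(subsetP sCY1)/prefix_choice_top/top_m.1.
have top1 : is_top Y1 m by split=> // y /(subsetP sY1Z); apply: top_m.2.
rewrite (Ch_top top1); apply/setP => z.
case: (boolP (z \in Y1)) => zY1; last first.
  have zC1 := contra (subsetP (prefix_choice_sub Y1 m) z) zY1.
  by rewrite (negbTE zC1) (negbTE (contra (subsetP sCY1 z) zY1)).
have zZ := subsetP sY1Z z zY1.
have [->|zm] := eqVneq z m; first by rewrite !prefix_choice_top ?mY1 ?(top_m.1).
rewrite [LHS]mem_prefix_choice //; apply/idP/idP => [fit|]; last first.
  rewrite mem_prefix_choice // => fit.
  by apply: le_lt_trans fit; apply/le_wsum/setUS/lowerS.
apply/negPn/negP => zC; have := prefix_choice_rejected top_m.1 zZ zC.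
have sub : z |: prefix_choice Z m \subset m |: lower Y1 z.
  apply/subsetP => y; rewrite !in_setU1 => /orP[/eqP->|yC].
    by rewrite inE zY1 wage_le_refl orbT.
  have [-> //|ym] := eqVneq y m.
  rewrite inE (subsetP sCY1 y yC) /=.
  exact: (prefix_choice_below top_m.1 yC ym zZ zC).
by move: (le_wsum w_ge0 sub) fit; rewrite wsumU1 //; lra.
Qed.

Lemma Ch_wsum_COM (Y2 Y1 : {set X}) : Y2 \subset Y1 ->
  wsum w Y2 <= Num.max B (wsum w (Ch w r B Y1)) ->
  wsum w Y2 <= wsum w (Ch w r B Y1).
Proof.
move=> sY; set C := Ch w r B Y1 => le_Y2_max.
case: (boolP (Y2 \subset C)) => [|/subsetPn[u uY2 uC]]; first exact: le_wsum.
have uY1 := subsetP sY u uY2.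
have [m [mY1 top_m] eC] : exists2 m, is_top Y1 m & C = prefix_choice Y1 m.
  by apply: Ch_prefix_choice; apply/set0Pn; exists u.
move: le_Y2_max; rewrite le_max => /orP[le_Y2B|//].
have [|lt_CB] := leP B (wsum w C); first exact: le_trans.
have heavy v : v \in Y1 -> v \notin C -> B / 2 < w v.
  rewrite eC => vY1 vC; have := prefix_choice_rejected mY1 vY1 vC.
  by rewrite -eC; lra.
have heavy_u := heavy u uY1 uC.
have heavy_m : B / 2 < w m by have := wage_leW (top_m u uY1); lra.
have light v : v \in Y2 -> v != u -> w v <= B / 2.
  by move=> vY2 vu; have := wsum2_le w_ge0 vu vY2 uY2; lra.
apply: (le_wsum_exchange w_ge0 uY2 (_ : m \in C)).
- by rewrite eC prefix_choice_top.
- apply/subsetP => y /setD1P[yu yY2]; have le_y := light y yY2 yu.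
  rewrite in_setD1; apply/andP; split.
    by apply: contraTneq le_y => ->; rewrite -ltNge.
  by apply: contraTT le_y => yC; rewrite -ltNge heavy // (subsetP sY).
- exact/wage_leW/top_m.
Qed.

End Greedy.

Theorem lemma7 (R : realFieldType) (X : finType) (w : X -> R) (B : R)
  (r : X -> nat) (gamma : R) (f : {set X} -> R) :
  0 < B ->
  (forall x, 0 < w x /\ w x <= B) ->
  injective r ->
  0 < gamma ->
  (forall Y : {set X}, f Y = gamma * wsum w Y) ->
  [/\ SUB (Ch w r B), IRC (Ch w r B) & COM w B f (Ch w r B)].
Proof.
move=> _ w_bounds r_inj gamma_gt0 f_wsum.
have w_ge0 x : 0 <= w x by case: (w_bounds x) => /ltW.
split; [exact: SUB_Ch | exact: IRC_Ch |].
move=> Y2 Y1 sY le_Y2_max; rewrite !f_wsum ler_pM2l //.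
exact: Ch_wsum_COM.
Qed.
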